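(* Suppose $L_p,\Psi_p$ satisfy $(A_p-L_pC_p)\Psi_p\oplus\mathbb{W}_p\oplus(-L_p\mathbb{V}_p)\subseteq\Psi_p$ with $0\in\Psi_p$, and suppose $H\in\mathbb{N}$, $K_p$, $\Omega_p\ni0$ and $(\mu,\eta,\Omega)$ are given by one of the following three options: (ZOH) $(A_p^i+B_p^iK_p)\Omega_p\oplus\big(\bigoplus_{j=0}^{i-1}A_p^jL_p(C_p\Psi_p\oplus\mathbb{V}_p)\big)\subseteq\Omega_p$ for all $i\in\{1,\dots,H\}$, $\mu(\bar\nu_c,\hat x_p,\bar x_p)=\bar\nu_c+K_p(\hat x_p-\bar x_p)$, $\eta\equiv0$, $\Omega=\Omega_p\times K_p\Omega_p\times\{0\}$; (prediction-based) $(A_p+B_pK_p)^i\Omega_p\oplus\big(\bigoplus_{j=0}^{i-1}A_p^jL_p(C_p\Psi_p\oplus\mathbb{V}_p)\big)\subseteq\Omega_p$ for all $i\in\{1,\dots,H\}$, $\mu(\bar\nu_c,\hat x_p,\bar x_p)=\bar\nu_c$, $\eta(\hat x_p,\tilde x_p,\bar x_p)=K_p(\tilde x_p-\bar x_p)$, $\Omega=\Omega_p\times\{0\}\times\{0\}$; (local measurement) $(A_p+B_pK_p)\Omega_p\oplus L_p(C_p\Psi_p\oplus\mathbb{V}_p)\subseteq\Omega_p$, $\mu(\bar\nu_c,\hat x_p,\bar x_p)=\bar\nu_c$, $\eta(\hat x_p,\tilde x_p,\bar x_p)=K_p(\hat x_p-\bar x_p)$, $\Omega=\Omega_p\times\{0\}\times\{0\}$.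 Let $t\in\mathbb{N}_0$, $h\in\{1,\dots,H\}$, and let nominal inputs $\bar u(i)=(\bar u_c(i),\bar\gamma(i),0)$, $i=t,\dots,t+h-1$, be given with $\bar\gamma(t)=1$ and $\bar\gamma(i)=0$ for $i\in\{t+1,\dots,t+h-1\}$. Let $x(t),\hat x(t),\bar x(t)$ be given with $\hat x(t)-\bar x(t)\in\Omega$ and $x(t)-\hat x(t)\in\Psi:=\Psi_p\times\{0\}\times\{0\}$, and set $\tilde x(t):=\hat x(t)$. For $i=t,\dots,t+h-1$ apply $u(i):=\phi'(\bar u(i),\hat x(i),\tilde x(i),\bar x(i))$ if $\bar\gamma(i)=1$ and $u(i):=\phi''(\bar u(i),\hat x(i),\tilde x(i),\bar x(i))$ if $\bar\gamma(i)=0$, and let the states evolve by $\bar x(i+1)=f(\bar x(i),\bar u(i))$, $\tilde x(i+1)=f(\tilde x(i),u(i))$, $x(i+1)=f(x(i),u(i))+w(i)$, $\hat x(i+1)=f(\hat x(i),u(i))+B_\epsilon(x(i)-\hat x(i))+B_vv(i)$. Then for all sequences $w(i)\in\mathbb{W}$, $v(i)\in\mathbb{V}$ ($i=t,\dots,t+h-1$) it holds for all $i\in\{t,\dots,t+h\}$ that $\hat x(i)\in\{\bar x(i)\}\oplus\Omega$ and $x(i)\in\{\hat x(i)\}\oplus\Psi\subseteq\{\bar x(i)\}\oplus\Omega\oplus\Psi$.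
   Context: $A_p\in\mathbb{R}^{n_p\times n_p}$, $B_p\in\mathbb{R}^{n_p\times m_p}$, $C_p\in\mathbb{R}^{q_p\times n_p}$; $\mathbb{W}_p\subseteq\mathbb{R}^{n_p}$, $\mathbb{V}_p\subseteq\mathbb{R}^{q_p}$ compact convex sets containing the origin; $L_p\in\mathbb{R}^{n_p\times q_p}$, $K_p\in\mathbb{R}^{m_p\times n_p}$; $B_p^i:=\sum_{j=0}^{i-1}A_p^jB_p$; integers $g\ge1$, $c\ge g$, $b\ge c$. Overall state $x=(x_p,u_s,\beta)\in\mathbb{R}^{n_p}\times\mathbb{R}^{m_p}\times\mathbb{R}$ (similarly $\hat x,\tilde x,\bar x$ with components $\hat x_p$ etc.), input $u=(u_c,\gamma,u_e)\in\mathbb{R}^{m_p}\times\{0,1\}\times\mathbb{R}^{m_p}$, $$f(x,u):=\begin{bmatrix}A_px_p+B_p((1-\gamma)u_s+\gamma u_c+u_e)\\ (1-\gamma)u_s+\gamma u_c\\ \min\{\beta+g-\gamma c,\,b\}\end{bmatrix}.$$ $\mathbb{W}:=\mathbb{W}_p\times\{0\}\times\{0\}$, $\mathbb{V}:=\mathbb{V}_p\times\{0\}\times\{0\}$, $B_\epsilon:=\mathrm{diag}\{L_pC_p,0,0\}$, $B_v:=\mathrm{diag}\{L_p,0,0\}$. For $\bar u=(\bar u_c,\bar\gamma,\cdot)$: $\phi'(\bar u,\hat x,\tilde x,\bar x):=(\mu(\bar u_c,\hat x_p,\bar x_p),1,\eta(\hat x_p,\tilde x_p,\bar x_p))$ and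 $\phi''(\bar u,\hat x,\tilde x,\bar x):=(0,0,\eta(\hat x_p,\tilde x_p,\bar x_p))$. $\oplus$ is Minkowski sum. *)

From HB Require Import structures.
From mathcomp Require Import all_boot all_order all_algebra.
From mathcomp Require Import all_classical all_reals.
From mathcomp Require Import topology normedtype convex.
Set Implicit Arguments. Unset Strict Implicit. Unset Printing Implicit Defensive.
Import Order.TTheory GRing.Theory Num.Theory.
Local Open Scope classical_set_scope.
Local Open Scope ring_scope.

Definition msum (V : zmodType) (A B : set V) : set V :=
  [set a + b | a in A & b in B].

Fixpoint bigmsum (V : zmodType) (F : nat -> set V) (n : nat) : set V :=
  match n with
  | 0 => [set 0]
  | n'.+1 => msum (bigmsum F n') (F n')
  end.

Definition mximg (R : ringType) (m n : nat) (M : 'M[R]_(m, n)) (A : set 'cV[R]_n)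
  : set 'cV[R]_m := [set M *m a | a in A].

Fixpoint mxpow (R : ringType) (n : nat) (A : 'M[R]_n) (i : nat) : 'M[R]_n :=
  match i with 0 => 1%:M | i'.+1 => A *m mxpow A i' end.

Definition Bpi (R : ringType) (n m : nat) (A : 'M[R]_n) (B : 'M[R]_(n, m)) (i : nat)
  : 'M[R]_(n, m) := \sum_(j < i) mxpow A j *m B.

(* Overall state x = (x_p, u_s, beta) (first component of dimension d;
   d = n_p for states, d = q_p for measurement noises v), and
   input u = (u_c, gamma, u_e) with gamma in {0,1} encoded as a bool. *)
Definition state (R : ringType) (d mp : nat) : Type :=
  ('cV[R]_d * 'cV[R]_mp * R)%type.
Definition input (R : ringType) (mp : nat) : Type :=
  ('cV[R]_mp * bool * 'cV[R]_mp)%type.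

Definition b2R (R : ringType) (b : bool) : R := if b then 1 else 0.

Definition fdyn (R : realDomainType) (np mp : nat) (Ap : 'M[R]_np) (Bp : 'M[R]_(np, mp))
  (g c b : nat) (x : state R np mp) (u : input R mp) : state R np mp :=
  let: (xp, us, beta) := x in
  let: (uc, gam, ue) := u in
  let s := (1 - b2R R gam) *: us + b2R R gam *: uc in
  (Ap *m xp + Bp *m (s + ue), s, Num.min (beta + g%:R - b2R R gam * c%:R) b%:R).

Definition prod3 (R : ringType) (d mp : nat) (S1 : set 'cV[R]_d) (S2 : set 'cV[R]_mp)
  (S3 : set R) : set (state R d mp) := [set x | S1 x.1.1 /\ S2 x.1.2 /\ S3 x.2].

Definition lift_set (R : ringType) (d mp : nat) (S : set 'cV[R]_d) : set (state R d mp) :=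
  prod3 S [set 0] [set 0].

(* B_eps = diag{L_p C_p, 0, 0} and B_v = diag{L_p, 0, 0} *)
Definition Beps (R : ringType) (np mp qp : nat) (Lp : 'M[R]_(np, qp)) (Cp : 'M[R]_(qp, np))
  (e : state R np mp) : state R np mp := (Lp *m Cp *m e.1.1, 0, 0).
Definition Bv (R : ringType) (np mp qp : nat) (Lp : 'M[R]_(np, qp))
  (v : state R qp mp) : state R np mp := (Lp *m v.1.1, 0, 0).

Definition phi1 (R : ringType) (np mp : nat)
  (mu : 'cV[R]_mp -> 'cV[R]_np -> 'cV[R]_np -> 'cV[R]_mp)
  (eta : 'cV[R]_np -> 'cV[R]_np -> 'cV[R]_np -> 'cV[R]_mp)
  (ub : input R mp) (xh xt xb : state R np mp) : input R mp :=
  (mu ub.1.1 xh.1.1 xb.1.1, true, eta xh.1.1 xt.1.1 xb.1.1).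
Definition phi2 (R : ringType) (np mp : nat)
  (eta : 'cV[R]_np -> 'cV[R]_np -> 'cV[R]_np -> 'cV[R]_mp)
  (ub : input R mp) (xh xt xb : state R np mp) : input R mp :=
  (0, false, eta xh.1.1 xt.1.1 xb.1.1).

From HB Require Import structures.
From mathcomp Require Import all_boot all_order all_algebra.
From mathcomp Require Import all_classical all_reals topology normedtype convex.
Set Implicit Arguments. Unset Strict Implicit. Unset Printing Implicit Defensive.
Import Order.TTheory GRing.Theory Num.Theory numFieldNormedType.Exports.
Local Open Scope classical_set_scope.
Local Open Scope ring_scope.

(* The proof separates the two error signals.
   - Estimation error e = x - xh.  The applied input enters x and xh
     identically, so e is an autonomous observer error; by the invariance
     hypothesis on Psi_p it stays in Psi = Psi_p x {0} x {0}
     (estimation_error_step / estimation_error).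
   - Tracking error d = xh - xb.  The nominal schedule resets the held input
     at the first step and holds it afterwards (held_after_reset), so the
     p-component of d obeys a linear recursion driven by the bounded
     innovation y = C e_p + v_p in Y := C Psi_p (+) V_p (tracking_error_step).
     Unrolling this recursion gives the three tube conditions of the paper:
     the ZOH and prediction designs are closed forms with the reachable noise
     set reach k = (+)_{j<k} A^j L Y (zoh_recursion, reach_recursion,
     mxpow_recursion); the local-measurement design is a one-step invariance
     (invariant_recursion). *)

Lemma msumI (V : zmodType) (A B : set V) (a b : V) :
  A a -> B b -> msum A B (a + b).
Proof. by move=> Aa Bb; exists a => //; exists b. Qed.

Lemma msum1 (V : zmodType) (S : set V) (a b : V) : S (a - b) -> msum [set b] S a.
Proof. by move=> Sab; rewrite -(subrKC b a); apply: msumI. Qed.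

Lemma msumSl (V : zmodType) (A A' B : set V) : A `<=` A' -> msum A B `<=` msum A' B.
Proof. by move=> AA' _ [a Aa [b Bb <-]]; apply: msumI => //; apply: AA'. Qed.

Lemma mximgI (R : nzRingType) (m n : nat) (M : 'M[R]_(m, n)) (A : set 'cV[R]_n) a :
  A a -> mximg M A (M *m a).
Proof. by move=> Aa; exists a. Qed.

(* The set reach k = (+)_{j<k} A^j L Y of all states reachable in k steps of
   x+ = A x + L y from 0 with inputs y in Y. *)
Section NoiseReach.
Variables (R : nzRingType) (n q : nat) (A : 'M[R]_n) (L : 'M[R]_(n, q)).
Variable Y : set 'cV[R]_q.

Definition reach (k : nat) : set 'cV[R]_n :=
  bigmsum (fun j => mximg (mxpow A j *m L) Y) k.

Lemma reach_step k a y : reach k a -> Y y -> reach k.+1 (A *m a + L *m y).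
Proof.
elim: k a => [|k IH] a /= ak Yy.
  by rewrite ak mulmx0 -[L]mul1mx; apply: msumI => //; apply: mximgI.
case: ak => a' a'k [_ [y' Yy' <-] <-].
rewrite mulmxDr addrAC; apply: msumI; first exact: IH.
by rewrite !mulmxA; apply: mximgI.
Qed.

Lemma reach_recursion (e : nat -> 'cV[R]_n) (y : nat -> 'cV[R]_q) N :
  e 0 = 0 -> (forall k, (k < N)%N -> Y (y k) /\ e k.+1 = A *m e k + L *m y k) ->
  forall k, (k <= N)%N -> reach k (e k).
Proof.
move=> e0 rec; elim=> [|k IH] kN; first by rewrite e0.
have [Yy ->] := rec k kN; exact: reach_step (IH (ltnW kN)) Yy.
Qed.

End NoiseReach.

Lemma Bpi0 (R : nzRingType) n m (A : 'M[R]_n) (B : 'M[R]_(n, m)) : Bpi A B 0 = 0.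
Proof. by rewrite /Bpi big_ord0. Qed.

Lemma BpiS (R : nzRingType) n m (A : 'M[R]_n) (B : 'M[R]_(n, m)) k :
  Bpi A B k.+1 = B + A *m Bpi A B k.
Proof.
rewrite /Bpi big_ord_recl /= mul1mx mulmx_sumr; congr (_ + _).
by apply: eq_bigr => j _; rewrite mulmxA.
Qed.

Lemma mxpow_recursion (R : nzRingType) n (M : 'M[R]_n) (z : nat -> 'cV[R]_n) N :
  (forall k, (k < N)%N -> z k.+1 = M *m z k) ->
  forall k, (k <= N)%N -> z k = mxpow M k *m z 0.
Proof.
move=> rec; elim=> [|k IH] kN; first by rewrite mul1mx.
by rewrite rec // IH ?(ltnW kN) // mulmxA.
Qed.

(* Zero-order hold of a feedback computed once at time 0: the solution of
   d+ = A d + B K d(0) + L y is (A^k + B^k K) d(0) plus a point of reach k. *)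
Lemma zoh_recursion (R : nzRingType) n m q (A : 'M[R]_n) (B : 'M[R]_(n, m))
    (K : 'M[R]_(m, n)) (L : 'M[R]_(n, q)) (Y : set 'cV[R]_q)
    (d : nat -> 'cV[R]_n) (y : nat -> 'cV[R]_q) N :
  (forall k, (k < N)%N -> Y (y k) /\ d k.+1 = A *m d k + B *m (K *m d 0) + L *m y k) ->
  forall k, (k <= N)%N ->
    exists2 a, reach A L Y k a & d k = (mxpow A k + Bpi A B k *m K) *m d 0 + a.
Proof.
move=> rec k kN.
pose e j := d j - (mxpow A j + Bpi A B j *m K) *m d 0.
exists (e k); last by rewrite addrC subrK.
apply: (reach_recursion (y := y) (N := N)) => // [|j jN].
  by rewrite /e Bpi0 mul0mx addr0 mul1mx subrr.
have [Yy dS] := rec j jN; split=> //.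
rewrite /e dS BpiS /= !mulmxDl !mulmxDr !mulmxA mulmxN mulmxDr !mulmxA.
rewrite [B *m K *m d 0 + _]addrC !opprD !addrA.
rewrite [in LHS](addrAC (A *m d j)) !(addrAC _ (B *m K *m d 0) (- _)) subrK.
by rewrite !(addrAC _ (L *m y j) (- _)).
Qed.

Lemma invariant_recursion (R : nzRingType) n q (M : 'M[R]_n) (L : 'M[R]_(n, q))
    (S : set 'cV[R]_n) (Y : set 'cV[R]_q) (d : nat -> 'cV[R]_n) (y : nat -> 'cV[R]_q) N :
  msum (mximg M S) (mximg L Y) `<=` S -> S (d 0) ->
  (forall k, (k < N)%N -> Y (y k) /\ d k.+1 = M *m d k + L *m y k) ->
  forall k, (k <= N)%N -> S (d k).
Proof.
move=> inv d0 rec; elim=> [|k IH] kN //.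
have [Yy ->] := rec k kN.
by apply: inv; apply: msumI; apply: mximgI => //; apply: IH; apply: ltnW.
Qed.

Section Designs.
Variables (R : nzRingType) (np mp qp : nat).
Variables (A : 'M[R]_np) (B : 'M[R]_(np, mp)) (C : 'M[R]_(qp, np)) (L : 'M[R]_(np, qp))
          (K : 'M[R]_(mp, np)).
Variables (Psi Om : set 'cV[R]_np) (V : set 'cV[R]_qp) (H : nat).
Variables (mu : 'cV[R]_mp -> 'cV[R]_np -> 'cV[R]_np -> 'cV[R]_mp)
          (eta : 'cV[R]_np -> 'cV[R]_np -> 'cV[R]_np -> 'cV[R]_mp)
          (Omega : set (state R np mp)).

Local Notation Y := (msum (mximg C Psi) V).

Definition zoh_design : Prop :=
  [/\ forall i, (1 <= i <= H)%N ->
        msum (mximg (mxpow A i + Bpi A B i *m K) Om) (reach A L Y i) `<=` Om,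
      mu = (fun nuc xhp xbp => nuc + K *m (xhp - xbp)),
      eta = (fun _ _ _ => 0) &
      Omega = prod3 Om (mximg K Om) [set 0]].

Definition prediction_design : Prop :=
  [/\ forall i, (1 <= i <= H)%N ->
        msum (mximg (mxpow (A + B *m K) i) Om) (reach A L Y i) `<=` Om,
      mu = (fun nuc _ _ => nuc),
      eta = (fun _ xtp xbp => K *m (xtp - xbp)) &
      Omega = prod3 Om [set 0] [set 0]].

Definition local_design : Prop :=
  [/\ msum (mximg (A + B *m K) Om) (mximg L Y) `<=` Om,
      mu = (fun nuc _ _ => nuc),
      eta = (fun xhp _ xbp => K *m (xhp - xbp)) &
      Omega = prod3 Om [set 0] [set 0]].

End Designs.

Lemma state_addE (R : nzRingType) d m (a b : state R d m) :
  a + b = (a.1.1 + b.1.1, a.1.2 + b.1.2, a.2 + b.2).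
Proof. by case: a b => [[? ?] ?] [[? ?] ?]. Qed.

Lemma state_subE (R : nzRingType) d m (a b : state R d m) :
  a - b = (a.1.1 - b.1.1, a.1.2 - b.1.2, a.2 - b.2).
Proof. by case: a b => [[? ?] ?] [[? ?] ?]. Qed.

Lemma lift_setP (R : nzRingType) d m (S : set 'cV[R]_d) (e : state R d m) :
  lift_set S e <-> [/\ S e.1.1, e.1.2 = 0 & e.2 = 0].
Proof. by split=> [[? [? ?]]|[? ? ?]]. Qed.

Section Dynamics.
Variables (R : realDomainType) (np mp : nat) (A : 'M[R]_np) (B : 'M[R]_(np, mp)) (g c b : nat).
Implicit Types (x : state R np mp) (u : input R mp).

Lemma fdyn_s x u : (fdyn A B g c b x u).1.2 = if u.1.2 then u.1.1 else x.1.2.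
Proof.
case: x u => [[xp xs] beta] [[uc [] ue]] /=.
  by rewrite subrr scale0r add0r scale1r.
by rewrite subr0 scale1r scale0r addr0.
Qed.

Lemma fdyn_p x u :
  (fdyn A B g c b x u).1.1 = A *m x.1.1 + B *m ((fdyn A B g c b x u).1.2 + u.2).
Proof. by case: x u => [[? ?] ?] [[? ?] ?]. Qed.

Lemma fdyn_b x u :
  (fdyn A B g c b x u).2 = Num.min (x.2 + g%:R - b2R R u.1.2 * c%:R) b%:R.
Proof. by case: x u => [[? ?] ?] [[? ?] ?]. Qed.

End Dynamics.

Lemma estimation_error_step (R : realDomainType) (np mp qp : nat)
    (A : 'M[R]_np) (B : 'M[R]_(np, mp)) (C : 'M[R]_(qp, np)) (L : 'M[R]_(np, qp))
    (g c b : nat) (Psi W : set 'cV[R]_np) (V : set 'cV[R]_qp)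
    (x xh : state R np mp) (u : input R mp) (w : state R np mp) (v : state R qp mp) :
  msum (msum (mximg (A - L *m C) Psi) W) (mximg (- L) V) `<=` Psi ->
  lift_set Psi (x - xh) -> lift_set W w -> lift_set V v ->
  lift_set Psi (fdyn A B g c b x u + w
                - (fdyn A B g c b xh u + Beps L C (x - xh) + Bv L v)).
Proof.
move=> inv /lift_setP[Pe es eb] /lift_setP[Ww w2 w3] /lift_setP[Vv _ _].
rewrite state_subE /= in Pe es eb.
have fs : (fdyn A B g c b x u).1.2 = (fdyn A B g c b xh u).1.2.
  by rewrite !fdyn_s (subr0_eq es).
have fb : (fdyn A B g c b x u).2 = (fdyn A B g c b xh u).2.
  by rewrite !fdyn_b (subr0_eq eb).
apply/lift_setP; rewrite /Beps /Bv !state_subE !state_addE /= fs fb.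
rewrite w2 w3 !addr0 !subrr; split=> //.
rewrite !fdyn_p fs; set s := B *m _.
have -> : A *m x.1.1 + s + w.1.1 - (A *m xh.1.1 + s + L *m C *m (x.1.1 - xh.1.1) + L *m v.1.1)
    = (A - L *m C) *m (x.1.1 - xh.1.1) + w.1.1 + (- L) *m v.1.1.
  rewrite mulmxBl [in RHS]mulmxBr mulNmx !opprD !addrA.
  rewrite [in LHS](addrAC (A *m x.1.1) s) (addrAC _ s (- _)) addrK.
  by rewrite [in LHS](addrAC (A *m x.1.1)) (addrAC _ w.1.1 (- _)).
by apply: inv; apply: msumI; [apply: msumI => //|]; apply: mximgI.
Qed.

Lemma lin_step_sub (R : nzRingType) n m (A : 'M[R]_n) (B : 'M[R]_(n, m))
    (a a' r : 'cV[R]_n) (s s' : 'cV[R]_m) :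
  A *m a + B *m s + r - (A *m a' + B *m s') = A *m (a - a') + B *m (s - s') + r.
Proof.
rewrite !mulmxBr opprD !addrA (addrAC _ r (- _)) (addrAC _ r (- _)).
by rewrite (addrAC (A *m a)) (addrAC _ (B *m s) (- _)).
Qed.

Lemma held_after_reset (T : Type) (gam : nat -> bool) (z a : nat -> T) (n : nat) :
  gam 0 = true -> (forall k, (0 < k < n)%N -> gam k = false) ->
  (forall k, (k < n)%N -> z k.+1 = if gam k then a k else z k) ->
  forall k, (0 < k <= n)%N -> z k = a 0.
Proof.
move=> gam0 hold rec; elim=> [//|k IH] /andP[_ kn].
rewrite rec //; have [->|k0] := posnP k; first by rewrite gam0.
by rewrite hold ?k0 // IH // k0 ltnW.
Qed.

Definition nominal_input (R : nzRingType) (mp : nat) (ubc : nat -> 'cV[R]_mp)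
  (gam : nat -> bool) (k : nat) : input R mp := (ubc k, gam k, 0).

Definition applied_input (R : nzRingType) (np mp : nat)
  (mu : 'cV[R]_mp -> 'cV[R]_np -> 'cV[R]_np -> 'cV[R]_mp)
  (eta : 'cV[R]_np -> 'cV[R]_np -> 'cV[R]_np -> 'cV[R]_mp)
  (ub : input R mp) (xh xt xb : state R np mp) : input R mp :=
  if ub.1.2 then phi1 mu eta ub xh xt xb else phi2 eta ub xh xt xb.

Section ClosedLoop.
Variables (R : realDomainType) (np mp qp : nat).
Variables (A : 'M[R]_np) (B : 'M[R]_(np, mp)) (C : 'M[R]_(qp, np)) (L : 'M[R]_(np, qp)).
Variables (g c b h : nat) (Psi W : set 'cV[R]_np) (V : set 'cV[R]_qp).
Variables (ubc : nat -> 'cV[R]_mp) (gam : nat -> bool).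
Variables (mu : 'cV[R]_mp -> 'cV[R]_np -> 'cV[R]_np -> 'cV[R]_mp)
          (eta : 'cV[R]_np -> 'cV[R]_np -> 'cV[R]_np -> 'cV[R]_mp).
Variables (w : nat -> state R np mp) (v : nat -> state R qp mp).
Variables (x xh xt xb : nat -> state R np mp).

Local Notation f := (fdyn A B g c b).
Local Notation ub k := (nominal_input ubc gam k).
Local Notation u k := (applied_input mu eta (ub k) (xh k) (xt k) (xb k)).

Hypothesis gam0 : gam 0 = true.
Hypothesis gam_hold : forall k, (0 < k < h)%N -> gam k = false.
Hypothesis step : forall k, (k < h)%N ->
  [/\ xb k.+1 = f (xb k) (ub k), xt k.+1 = f (xt k) (u k), x k.+1 = f (x k) (u k) + w k &
      xh k.+1 = f (xh k) (u k) + Beps L C (x k - xh k) + Bv L (v k)].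

Lemma applied_inputE k :
  [/\ (u k).1.2 = gam k, (u k).2 = eta (xh k).1.1 (xt k).1.1 (xb k).1.1 &
      gam k -> (u k).1.1 = mu (ubc k) (xh k).1.1 (xb k).1.1].
Proof. by rewrite /applied_input /=; case: (gam k). Qed.

Lemma observer_step k : (k < h)%N ->
  [/\ (xh k.+1).1.1 = (f (xh k) (u k)).1.1 + L *m (C *m (x k - xh k).1.1 + (v k).1.1),
      (xh k.+1).1.2 = (f (xh k) (u k)).1.2 & (xh k.+1).2 = (f (xh k) (u k)).2].
Proof.
move=> kh; have [_ _ _ ->] := step kh.
by rewrite /Beps /Bv !state_addE /= !addr0 mulmxDr mulmxA addrA.
Qed.

Hypothesis Psi_inv : msum (msum (mximg (A - L *m C) Psi) W) (mximg (- L) V) `<=` Psi.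
Hypothesis x_err0 : lift_set Psi (x 0 - xh 0).
Hypothesis w_in : forall k, (k < h)%N -> lift_set W (w k).
Hypothesis v_in : forall k, (k < h)%N -> lift_set V (v k).

Lemma estimation_error k : (k <= h)%N -> lift_set Psi (x k - xh k).
Proof.
elim: k => [//|k IH] kh; have [_ _ -> ->] := step kh.
exact: estimation_error_step Psi_inv (IH (ltnW kh)) (w_in kh) (v_in kh).
Qed.

Lemma innovation k : (k < h)%N -> msum (mximg C Psi) V (C *m (x k - xh k).1.1 + (v k).1.1).
Proof.
move=> kh; have /lift_setP[Pe _ _] := estimation_error (ltnW kh).
by have /lift_setP[Vv _ _] := v_in kh; apply: msumI => //; apply: mximgI.
Qed.

Local Notation sh := (mu (ubc 0) (xh 0).1.1 (xb 0).1.1).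

Lemma held_inputs k : (0 < k <= h)%N ->
  [/\ (xb k).1.2 = ubc 0, (xt k).1.2 = sh & (xh k).1.2 = sh].
Proof.
have mode j : (u j).1.2 = gam j by case: (applied_inputE j).
have reset : (u 0).1.1 = sh by case: (applied_inputE 0) => _ _ ->.
move=> kh; split.
- apply: (held_after_reset (z := fun j => (xb j).1.2) gam0 gam_hold _ kh) => j jh.
  by have [-> _ _ _] := step jh; rewrite fdyn_s.
- rewrite -reset.
  apply: (held_after_reset (z := fun j => (xt j).1.2) (a := fun j => (u j).1.1)
            gam0 gam_hold _ kh) => j jh.
  by have [_ -> _ _] := step jh; rewrite fdyn_s (mode j).
- rewrite -reset.
  apply: (held_after_reset (z := fun j => (xh j).1.2) (a := fun j => (u j).1.1)
            gam0 gam_hold _ kh) => j jh.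
  by have [_ -> _] := observer_step jh; rewrite fdyn_s (mode j).
Qed.

(* xh and xb share the mode sequence, so their counters beta agree. *)
Lemma beta_sync : (xh 0).2 = (xb 0).2 -> forall k, (k <= h)%N -> (xh k).2 = (xb k).2.
Proof.
move=> beta0; elim => [//|k IH] kh; have [_ _ ->] := observer_step kh.
have [-> _ _ _] := step kh; have [mode _ _] := applied_inputE k.
by rewrite !fdyn_b (IH (ltnW kh)) mode.
Qed.

Local Notation d k := ((xh k).1.1 - (xb k).1.1).
Local Notation eta_at k := (eta (xh k).1.1 (xt k).1.1 (xb k).1.1).
Local Notation y k := (C *m (x k - xh k).1.1 + (v k).1.1).

Lemma state_dynamics k : (k < h)%N ->
  [/\ (xb k.+1).1.1 = A *m (xb k).1.1 + B *m ubc 0,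
      (xt k.+1).1.1 = A *m (xt k).1.1 + B *m (sh + eta_at k) &
      (xh k.+1).1.1 = A *m (xh k).1.1 + B *m (sh + eta_at k) + L *m y k].
Proof.
move=> kh; have [sb st shh] := held_inputs (k := k.+1) kh.
have [xbS xtS _ _] := step kh; have [xhp xhs _] := observer_step kh.
have [_ ext _] := applied_inputE k.
split.
- by rewrite xbS fdyn_p -xbS sb addr0.
- by rewrite xtS fdyn_p -xtS st ext.
- by rewrite xhp fdyn_p -xhs shh ext.
Qed.

Lemma tracking_error_step k : (k < h)%N ->
  d k.+1 = A *m d k + B *m (sh + eta_at k - ubc 0) + L *m y k.
Proof. by move=> kh; have [-> _ ->] := state_dynamics kh; rewrite lin_step_sub. Qed.

Lemma tracking_in_prod3 (Om : set 'cV[R]_np) (S : set 'cV[R]_mp) k : (k <= h)%N ->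
  prod3 Om S [set 0] (xh 0 - xb 0) ->
  ((0 < k)%N -> Om (d k)) -> ((0 < k)%N -> S (sh - ubc 0)) ->
  prod3 Om S [set 0] (xh k - xb k).
Proof.
move=> kh init Omd Ssh; have [->//|k0] := posnP k.
have [sb _ shh] : [/\ (xb k).1.2 = ubc 0, (xt k).1.2 = sh & (xh k).1.2 = sh].
  by apply: held_inputs; rewrite k0 kh.
have beta0 : (xh 0).2 = (xb 0).2 by apply/subr0_eq; case: init => _ [].
rewrite state_subE /prod3 /= sb shh beta_sync // subrr.
by split; [exact: Omd | split; [exact: Ssh|]].
Qed.

Lemma zoh_tracking (K : 'M[R]_(mp, np)) (Om : set 'cV[R]_np) (H : nat) :
  (h <= H)%N ->
  (forall i, (1 <= i <= H)%N ->
     msum (mximg (mxpow A i + Bpi A B i *m K) Om) (reach A L (msum (mximg C Psi) V) i)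
     `<=` Om) ->
  mu = (fun nuc xhp xbp => nuc + K *m (xhp - xbp)) -> eta = (fun _ _ _ => 0) ->
  Om (d 0) -> forall k, (0 < k <= h)%N -> Om (d k).
Proof.
move=> hH inv mu_eq eta_eq Om0 k /andP[k0 kh].
have rec j : (j < h)%N -> msum (mximg C Psi) V (y j) /\
    d j.+1 = A *m d j + B *m (K *m d 0) + L *m y j.
  move=> jh; split; first exact: innovation.
  by rewrite tracking_error_step // mu_eq eta_eq /= addr0 (addrC (ubc 0)) addrK.
have [a reach_a ->] := zoh_recursion (d := fun j => d j) (y := fun j => y j) rec kh.
apply: (inv k); first by rewrite k0 (leq_trans kh hH).
by apply: msumI => //; apply: mximgI.
Qed.

Hypothesis xt0 : xt 0 = xh 0.

(* Prediction design: xt_p - xb_p follows A + B K, and xh_p - xt_p is a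
   reach point since xt is the noise-free copy of xh. *)
Lemma prediction_tracking (K : 'M[R]_(mp, np)) (Om : set 'cV[R]_np) (H : nat) :
  (h <= H)%N ->
  (forall i, (1 <= i <= H)%N ->
     msum (mximg (mxpow (A + B *m K) i) Om) (reach A L (msum (mximg C Psi) V) i)
     `<=` Om) ->
  mu = (fun nuc _ _ => nuc) -> eta = (fun _ xtp xbp => K *m (xtp - xbp)) ->
  Om (d 0) -> forall k, (0 < k <= h)%N -> Om (d k).
Proof.
move=> hH inv mu_eq eta_eq Om0 k /andP[k0 kh].
have prediction j : (j < h)%N ->
    (xt j.+1).1.1 - (xb j.+1).1.1 = (A + B *m K) *m ((xt j).1.1 - (xb j).1.1).
  move=> jh; have [-> -> _] := state_dynamics jh.
  rewrite -[A *m _ + B *m (sh + _)]addr0 lin_step_sub mu_eq eta_eq /=.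
  by rewrite (addrC (ubc 0)) addrK addr0 mulmxDl mulmxA.
have correction j : (j <= h)%N ->
    reach A L (msum (mximg C Psi) V) j ((xh j).1.1 - (xt j).1.1).
  apply: (reach_recursion (e := fun j => (xh j).1.1 - (xt j).1.1) (y := fun j => y j))
    => [|i ih].
    by rewrite xt0 subrr.
  split; first exact: innovation.
  by have [_ -> ->] := state_dynamics ih; rewrite lin_step_sub subrr mulmx0 addr0.
have nominal := mxpow_recursion (z := fun j => (xt j).1.1 - (xb j).1.1) prediction kh.
rewrite /= xt0 in nominal.
have -> : d k = mxpow (A + B *m K) k *m d 0 + ((xh k).1.1 - (xt k).1.1).
  by rewrite -nominal [in RHS]addrC addrA subrK.
apply: (inv k); first by rewrite k0 (leq_trans kh hH).
by apply: msumI; [apply: mximgI | apply: correction].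
Qed.

(* Local-measurement design: d+ = (A + B K) d + L y, a one-step invariance. *)
Lemma local_tracking (K : 'M[R]_(mp, np)) (Om : set 'cV[R]_np) :
  msum (mximg (A + B *m K) Om) (mximg L (msum (mximg C Psi) V)) `<=` Om ->
  mu = (fun nuc _ _ => nuc) -> eta = (fun xhp _ xbp => K *m (xhp - xbp)) ->
  Om (d 0) -> forall k, (k <= h)%N -> Om (d k).
Proof.
move=> inv mu_eq eta_eq Om0.
apply: (invariant_recursion (d := fun k => d k) (y := fun k => y k) inv Om0) => k kh.
split; first exact: innovation.
by rewrite tracking_error_step // mu_eq eta_eq /= (addrC (ubc 0)) addrK mulmxDl mulmxA.
Qed.

Lemma closed_loop_tubes (K : 'M[R]_(mp, np)) (Om : set 'cV[R]_np) (H : nat)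
    (Omega : set (state R np mp)) :
  (h <= H)%N -> Omega (xh 0 - xb 0) ->
  [\/ zoh_design A B C L K Psi Om V H mu eta Omega,
      prediction_design A B C L K Psi Om V H mu eta Omega |
      local_design A B C L K Psi Om V mu eta Omega] ->
  forall k, (k <= h)%N -> Omega (xh k - xb k) /\ lift_set Psi (x k - xh k).
Proof.
move=> hH init design k kh; split; last exact: estimation_error.
case: design => [] [inv mu_eq eta_eq Om_eq]; rewrite Om_eq in init *;
  have [Om0 _] := init; apply: (tracking_in_prod3 kh init) => k0.
- by apply: (zoh_tracking hH inv mu_eq eta_eq Om0); rewrite k0 kh.
- by rewrite mu_eq /= (addrC (ubc 0)) addrK; apply: mximgI.
- by apply: (prediction_tracking hH inv mu_eq eta_eq Om0); rewrite k0 kh.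
- by rewrite mu_eq /= subrr.
- exact: (local_tracking inv mu_eq eta_eq Om0).
- by rewrite mu_eq /= subrr.
Qed.

End ClosedLoop.

Theorem proposition1 (R : realType) (np mp qp : nat)
  (Ap : 'M[R]_np) (Bp : 'M[R]_(np, mp)) (Cp : 'M[R]_(qp, np))
  (Wp : set 'cV[R]_np) (Vp : set 'cV[R]_qp)
  (Lp : 'M[R]_(np, qp)) (Kp : 'M[R]_(mp, np)) (g c b : nat)
  (Psip Omegap : set 'cV[R]_np) (H : nat)
  (mu : 'cV[R]_mp -> 'cV[R]_np -> 'cV[R]_np -> 'cV[R]_mp)
  (eta : 'cV[R]_np -> 'cV[R]_np -> 'cV[R]_np -> 'cV[R]_mp)
  (Omega : set (state R np mp))
  (t h : nat) (ubc : nat -> 'cV[R]_mp) (gbar : nat -> bool)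
  (w : nat -> state R np mp) (v : nat -> state R qp mp)
  (x xh xt xb : nat -> state R np mp) :
  (* standing assumptions *)
  compact Wp -> convex_set Wp -> Wp 0 ->
  compact Vp -> convex_set Vp -> Vp 0 ->
  (1 <= g)%N -> (g <= c)%N -> (c <= b)%N ->
  (* observer error invariance *)
  msum (msum (mximg (Ap - Lp *m Cp) Psip) Wp) (mximg (- Lp) Vp) `<=` Psip ->
  Psip 0 ->
  Omegap 0 ->
  (* one of the three options *)
  [\/ (* ZOH *)
      [/\ (forall i, (1 <= i <= H)%N ->
             msum (mximg (mxpow Ap i + Bpi Ap Bp i *m Kp) Omegap)
                  (bigmsum (fun j => mximg (mxpow Ap j *m Lp) (msum (mximg Cp Psip) Vp)) i)
             `<=` Omegap),
          mu = (fun nuc xhp xbp => nuc + Kp *m (xhp - xbp)),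
          eta = (fun _ _ _ => 0) &
          Omega = prod3 Omegap (mximg Kp Omegap) [set 0]],
      (* prediction-based *)
      [/\ (forall i, (1 <= i <= H)%N ->
             msum (mximg (mxpow (Ap + Bp *m Kp) i) Omegap)
                  (bigmsum (fun j => mximg (mxpow Ap j *m Lp) (msum (mximg Cp Psip) Vp)) i)
             `<=` Omegap),
          mu = (fun nuc _ _ => nuc),
          eta = (fun _ xtp xbp => Kp *m (xtp - xbp)) &
          Omega = prod3 Omegap [set 0] [set 0]] |
      (* local measurement *)
      [/\ msum (mximg (Ap + Bp *m Kp) Omegap) (mximg Lp (msum (mximg Cp Psip) Vp))
             `<=` Omegap,
          mu = (fun nuc _ _ => nuc),
          eta = (fun xhp _ xbp => Kp *m (xhp - xbp)) &
          Omega = prod3 Omegap [set 0] [set 0]]] ->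
  (1 <= h <= H)%N ->
  gbar t = true ->
  (forall i, (t < i < t + h)%N -> gbar i = false) ->
  (* initial conditions *)
  Omega (xh t - xb t) ->
  lift_set Psip (x t - xh t) ->
  xt t = xh t ->
  (* disturbances and measurement noises *)
  (forall i, (t <= i < t + h)%N -> lift_set Wp (w i)) ->
  (forall i, (t <= i < t + h)%N -> lift_set Vp (v i)) ->
  (* closed-loop evolution *)
  (forall i, (t <= i < t + h)%N ->
     let ub : input R mp := (ubc i, gbar i, 0) in
     let u : input R mp :=
       if gbar i then phi1 mu eta ub (xh i) (xt i) (xb i)
       else phi2 eta ub (xh i) (xt i) (xb i) in
     [/\ xb i.+1 = fdyn Ap Bp g c b (xb i) ub,
         xt i.+1 = fdyn Ap Bp g c b (xt i) u,
         x i.+1 = fdyn Ap Bp g c b (x i) u + w i &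
         xh i.+1 = fdyn Ap Bp g c b (xh i) u + Beps Lp Cp (x i - xh i) + Bv Lp (v i)]) ->
  forall i, (t <= i <= t + h)%N ->
    [/\ msum [set xb i] Omega (xh i),
        msum [set xh i] (lift_set Psip) (x i) &
        msum [set xh i] (lift_set Psip)
          `<=` msum (msum [set xb i] Omega) (lift_set Psip)].
Proof.
move=> _ _ _ _ _ _ _ _ _ Psi_inv _ _ design /andP[_ hH] gam0 hold init err0 xt0 w_in v_in step.
move=> i /andP[ti tih].
have [k -> kh] : exists2 k, i = (t + k)%N & (k <= h)%N.
  by exists (i - t)%N; [rewrite subnKC | rewrite leq_subLR].
have in_window j : (j < h)%N -> (t <= t + j < t + h)%N by rewrite leq_addr ltn_add2l.
have [Omk Psik] : Omega (xh (t + k)%N - xb (t + k)%N) /\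
                  lift_set Psip (x (t + k)%N - xh (t + k)%N).
  apply: (closed_loop_tubes (x := fun j => x (t + j)%N) (xh := fun j => xh (t + j)%N)
    (xt := fun j => xt (t + j)%N) (xb := fun j => xb (t + j)%N) (w := fun j => w (t + j)%N)
    (v := fun j => v (t + j)%N) (gam := fun j => gbar (t + j)%N) (ubc := fun j => ubc (t + j)%N)
    _ _ _ Psi_inv _ _ _ _ hH _ design (k := k) kh).
  - by rewrite addn0.
  - by move=> j /andP[j0 jh]; apply: hold; rewrite -{1}[t]addn0 ltn_add2l j0 ltn_add2l.
  - by move=> j jh; rewrite addnS; apply: step; apply: in_window.
  - by rewrite addn0.
  - by move=> j jh; apply: w_in; apply: in_window.
  - by move=> j jh; apply: v_in; apply: in_window.
  - by rewrite addn0.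
  - by rewrite addn0.
have xh_tube : msum [set xb (t + k)%N] Omega (xh (t + k)%N) by apply: msum1.
split=> //; first exact: msum1.
by apply: msumSl => _ ->.
Qed.
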